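(* Under the derivation $d/dt_1=d/dt_{1,1}+d/dt_{2,1}$ one has $$\frac{du}{dt_1}=\partial_1^3(u)+\partial_2^3(u)+3\partial_1(v_0u)+3\partial_2(w_0u),$$ $$\frac{dv_0}{dt_1}=\partial_1^3(v_0)+\partial_2^3(v_0)+6v_0\partial_1(v_0)+3\partial_1(uw_0)+3\partial_1(v_1),$$ and moreover $\partial_2(v_0)=\partial_1(u)$, $\partial_1(w_0)=\partial_2(u)$, where $w_0=\tau(v_0)$. Consequently, setting $v=3v_0$ (so $\tau(v)=3w_0$), $u$ satisfies the Novikov–Veselov equation $\frac{du}{dt_1}=\partial_1^3u+\partial_2^3u+\partial_1(uv)+\partial_2(u\,\tau(v))$ with $3\partial_1u=\partial_2v$.
   Context: Let $\mathcal{A}$ be the commutative $\mathbb{C}$-algebra of differential polynomials generated by $u$, $(v_i)_{i\ge0}$, $(w_j)_{j\ge0}$ and their jets under two commuting derivations $\partial_1,\partial_2$, subject to $\partial_2(\mathcal{L}_1)=[\mathcal{L}_1,\partial_1^{-1}u]$ and $\partial_1(\mathcal{L}_2)=[\mathcal{L}_2,\partial_2^{-1}u]$, where $\mathcal{L}_1=\partial_1^{-1}(\partial_1^2+v_0+\partial_1^{-1}v_1\partial_1^{-1}+\cdots)$, $\mathcal{L}_2=\partial_2^{-1}(\partial_2^2+w_0+\partial_2^{-1}w_1\partial_2^{-1}+\cdots)$, with $\partial_2(\mathcal{L}_1)$ (resp. $\partial_1(\mathcal{L}_2)$) meaning the derivation applied coefficientwise. Adjoint: anti-automorphism with $\partial_i^*=-\partial_i$,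 $a^*=a$. $\mathcal{H}=\partial_1\partial_2+u$, $A_{i,n}=(\mathcal{L}_i^{2n+1})_+$ (nonnegative-power part). For $\mathcal{P}\in\mathcal{A}[\partial_2]((\partial_1^{-1}))$, ''$\mathcal{P}\ \mathrm{mod}\ \mathcal{H}$'' is the unique element of $\mathcal{A}((\partial_1^{-1}))$ of the form $\mathcal{P}-\mathcal{Q}\mathcal{H}$, $\mathcal{Q}\in\mathcal{A}[\partial_2]((\partial_1^{-1}))$ (symmetrically with $1,2$ swapped). The $d/dt_{i,n}$ are the evolutionary derivations of $\mathcal{A}$ (commuting with $\partial_1,\partial_2$) defined by $d\mathcal{L}_i/dt_{i,n}=[A_{i,n},\mathcal{L}_i]$, $d\mathcal{L}_1/dt_{2,n}=[A_{2,n},\mathcal{L}_1]\ \mathrm{mod}\ \mathcal{H}$, $d\mathcal{L}_2/dt_{1,n}=[A_{1,n},\mathcal{L}_2]\ \mathrm{mod}\ \mathcal{H}$, $du/dt_{i,n}=-A_{i,n}^*(u)$. $\tau$ is the $\mathbb{R}$-algebra involution of $\mathcal{A}$ conjugating scalars and sending $\partial_1^n(v_i)\mapsto\partial_2^n(w_i)$, $\partial_2^n(w_j)\mapsto\partial_1^n(v_j)$, $\partial_1^p\partial_2^q(u)\mapsto\partial_1^q\partial_2^p(u)$. *)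

From HB Require Import structures.
From mathcomp Require Import all_boot all_algebra.
From mathcomp Require Import complex.
From mathcomp Require Import reals.
Set Implicit Arguments. Unset Strict Implicit. Unset Printing Implicit Defensive.
Import GRing.Theory Num.Theory.
Local Open Scope ring_scope.

(* Generalized binomial coefficient C(m, j) = m(m-1)...(m-j+1)/j!, m : int. *)
(*   C(n, j) for n >= 0 ; C(-(n+1), j) = (-1)^j C(n+j, j).                  *)
Definition binz (m : int) (j : nat) : int :=
  match m with
  | Posz n => ('C(n, j))%:Z
  | Negz n => (-1) ^+ j * ('C(j + n, j))%:Z
  end.

Section PseudoDifferential.
Variable A : comPzRingType.

(* Psd o c  represents   \sum_{s >= 0} c s  d^(o - s).                      *)
(* Operators are compared through their coefficient functions [coef].       *)
Record psd := Psd { pord : int; pcf : nat -> A }.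

Definition coef (P : psd) (m : int) : A :=
  match (pord P - m)%R with Posz s => pcf P s | Negz _ => 0 end.

Definition psd_of (o : int) (f : int -> A) : psd := Psd o (fun s => f (o - s%:Z)).

Definition padd (P Q : psd) : psd :=
  psd_of (Num.max (pord P) (pord Q)) (fun m => coef P m + coef Q m).
Definition popp (P : psd) : psd := Psd (pord P) (fun s => - pcf P s).
Definition psub (P Q : psd) : psd := padd P (popp Q).

Definition pconst (a : A) : psd := Psd 0 (fun s => if s is 0%N then a else 0).
Definition pmon (m : int) : psd := Psd m (fun s => if s is 0%N then 1 else 0).

(* product, via  d^m b = \sum_j C(m,j) d^j(b) d^(m-j)  *)
Definition pmul (d : A -> A) (P Q : psd) : psd :=
  Psd (pord P + pord Q)
    (fun s => \sum_(i < s.+1) \sum_(j < s.+1 - i)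
        (pcf P i * iter j d (pcf Q (s - i - j)%N)) *~ binz (pord P - i%:Z) j).

Definition pcomm (d : A -> A) (P Q : psd) : psd := psub (pmul d P Q) (pmul d Q P).

Definition ppow (d : A -> A) (P : psd) (n : nat) : psd := iter n (pmul d P) (pmon 0).

Definition pmap (f : A -> A) (P : psd) : psd := Psd (pord P) (fun s => f (pcf P s)).

Definition pplus (P : psd) : psd :=
  psd_of (pord P) (fun m => if (0 <= m)%R then coef P m else 0).

(* For a differential operator P = \sum_{k>=0} a_k d^k, its adjoint
   P^* = \sum_k (-d)^k o a_k applied to f, i.e. P^*(f) = \sum_k (-1)^k d^k(a_k f). *)
Definition padj_app (d : A -> A) (P : psd) (f : A) : A :=
  \sum_(k < `|pord P|.+1) (-1) ^+ k * iter k d (coef P k%:Z * f).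

(* Psd2 o n c represents \sum_{s>=0} \sum_{k<=n} c s k d^(o-s) e^k.         *)
Record psd2 := Psd2 { qord : int; qdeg : nat; qcf : nat -> nat -> A }.

Definition coef2 (P : psd2) (m : int) (k : nat) : A :=
  if (k <= qdeg P)%N then
    match (qord P - m)%R with Posz s => qcf P s k | Negz _ => 0 end
  else 0.

Definition q_of (o : int) (n : nat) (f : int -> nat -> A) : psd2 :=
  Psd2 o n (fun s k => f (o - s%:Z) k).

Definition qadd (P Q : psd2) : psd2 :=
  q_of (Num.max (qord P) (qord Q)) (maxn (qdeg P) (qdeg Q))
       (fun m k => coef2 P m k + coef2 Q m k).
Definition qopp (P : psd2) : psd2 := Psd2 (qord P) (qdeg P) (fun s k => - qcf P s k).
Definition qsub (P Q : psd2) : psd2 := qadd P (qopp Q).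

(* product, via (a d^m e^k)(b d^n e^l)
     = \sum_{i,j} C(m,i) C(k,j) a d^i(e^j(b)) d^(m+n-i) e^(k+l-j) *)
Definition qmul (d e : A -> A) (P Q : psd2) : psd2 :=
  Psd2 (qord P + qord Q) (qdeg P + qdeg Q)
    (fun s r => \sum_(sp < s.+1) \sum_(i < s.+1 - sp)
        \sum_(kp < (qdeg P).+1) \sum_(j < kp.+1) \sum_(lq < (qdeg Q).+1)
          if (kp - j + lq == r)%N then
            (qcf P sp kp * iter i d (iter j e (qcf Q (s - sp - i)%N lq)))
              *~ (binz (qord P - sp%:Z) i * ('C(kp, j))%:Z)
          else 0).

Definition qcomm (d e : A -> A) (P Q : psd2) : psd2 := qsub (qmul d e P Q) (qmul d e Q P).

Definition ser2 (P : psd) : psd2 :=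
  Psd2 (pord P) 0 (fun s k => if k is 0%N then pcf P s else 0).

(* embedding of a differential operator \sum_{k>=0} a_k e^k (given as an
   element of A((e^{-1})) with no negative powers, e.g. (L)_+) into A[e]((d^{-1})) *)
Definition poly2 (P : psd) : psd2 :=
  Psd2 0 `|pord P| (fun s k => if s is 0%N then coef P k%:Z else 0).

(* H = d e + u  (= d_1 d_2 + u) *)
Definition H2 (u : A) : psd2 :=
  Psd2 1 1 (fun s k => match s, k with
                       | 0%N, 1%N => 1
                       | 1%N, 0%N => u
                       | _, _ => 0 end).

Definition modH (d e : A -> A) (u : A) (P : psd2) (Q : psd) : Prop :=
  exists X : psd2, forall m k,
    coef2 P m k = coef2 (qadd (ser2 Q) (qmul d e X (H2 u))) m k.

(*   K = d^2 + v_0 + d^{-1} v_1 d^{-1} + ... = d^2 + \sum_i d^{-i} v_i d^{-i}, *)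
(* d^{-i} v d^{-i} = \sum_j C(-i,j) d^j(v) d^{-2i-j}.                       *)
Definition Kop (d : A -> A) (v : nat -> A) : psd :=
  Psd 2 (fun s => if s is 0%N then 1 else
     \sum_(i < s | (2 * i + 2 <= s)%N)
        iter (s - 2 - 2 * i) d (v i) *~ binz (- (i%:Z)) (s - 2 - 2 * i)).

Definition Lop (d : A -> A) (v : nat -> A) : psd := pmul d (pmon (-1)) (Kop d v).

Definition Aop (d : A -> A) (v : nat -> A) (n : nat) : psd :=
  pplus (ppow d (Lop d v) (2 * n + 1)).

Definition lax_relation (d e : A -> A) (u : A) (v : nat -> A) : Prop :=
  forall m, coef (pmap e (Lop d v)) m
          = coef (pcomm d (Lop d v) (pmul d (pmon (-1)) (pconst u))) m.

(* The flow t_{a,n} where a is the index of (da, va) and b the other index: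
     dL_a/dt = [A_{a,n}, L_a],
     dL_b/dt = [A_{a,n}, L_b] mod H      (computed in A[da]((db^{-1}))),
     du/dt   = - A_{a,n}^*(u).                                          *)
Definition lax_flow (da db : A -> A) (u : A) (va vb : nat -> A)
    (D : A -> A) (n : nat) : Prop :=
  [/\ forall m, coef (pmap D (Lop da va)) m
              = coef (pcomm da (Aop da va n) (Lop da va)) m,
      exists Q, modH db da u (qcomm db da (poly2 (Aop da va n)) (ser2 (Lop db vb))) Q
                /\ forall m, coef (pmap D (Lop db vb)) m = coef Q m
    & D u = - padj_app da (Aop da va n) u].

End PseudoDifferential.

Definition is_derivation (C : pzRingType) (A : comAlgType C) (D : A -> A) : Prop :=
  [/\ forall a b, D (a + b) = D a + D b,
      forall a b, D (a * b) = D a * b + a * D b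
    & forall (c : C) a, D (c *: a) = c *: D a].

From HB Require Import structures.
From mathcomp Require Import all_boot all_order all_algebra.
From mathcomp Require Import complex reals ring zify.
Set Implicit Arguments. Unset Strict Implicit. Unset Printing Implicit Defensive.
Import Order.TTheory GRing.Theory Num.Theory.
Local Open Scope ring_scope.

(* Every identity of the theorem is the comparison of one coefficient of an
   operator identity, and only finitely many coefficients of the operators
   involved matter.  For the cross flow, the
   commutator [A_1(e), L(d)] in A[e]((d^-1)) is computed in d-degrees 1, 0, -1,
   and the reduction modulo H = d e + u is inverted in low degree: the
   d^-1 coefficient of the reduced operator is P_{-1,0} - P_{0,1} u. *)

Section Coefficients.
Variable A : comPzRingType.

Lemma coefE (P : psd A) m s : pord P - m = s%:Z -> coef P m = pcf P s.
Proof. by rewrite /coef => ->. Qed.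

Lemma coef_gt (P : psd A) m : pord P < m -> coef P m = 0.
Proof. rewrite /coef => h; case E: (pord P - m) => [s|s] //; exfalso; lia. Qed.

Lemma coef_psd_of o (f : int -> A) m :
  coef (psd_of o f) m = if m <= o then f m else 0.
Proof.
rewrite /coef /psd_of /=; case: ifP => h; case E: (o - m) => [s|s] //=; try lia.
by congr f; lia.
Qed.

Lemma coef_padd (P Q : psd A) m : coef (padd P Q) m = coef P m + coef Q m.
Proof.
rewrite /padd coef_psd_of le_max; case: ifP => // /negbT; rewrite negb_or -!ltNge.
by case/andP => h1 h2; rewrite !coef_gt ?addr0.
Qed.

Lemma coef_popp (P : psd A) m : coef (popp P) m = - coef P m.
Proof. by rewrite /coef /=; case: (pord P - m) => s //; rewrite oppr0. Qed.

Lemma coef_pcomm d (P Q : psd A) m :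
  coef (pcomm d P Q) m = coef (pmul d P Q) m - coef (pmul d Q P) m.
Proof. by rewrite /pcomm /psub coef_padd coef_popp. Qed.

Lemma coef_pplus (P : psd A) m : coef (pplus P) m = if 0 <= m then coef P m else 0.
Proof.
rewrite /pplus coef_psd_of; case: ifP => // /negbT; rewrite -ltNge => h.
by case: ifP => // _; rewrite coef_gt.
Qed.

Lemma coef_pmap f (P : psd A) m s :
  pord P - m = s%:Z -> coef (pmap f P) m = f (pcf P s).
Proof. by rewrite /coef /= => ->. Qed.

Lemma coef2E (P : psd2 A) m k s :
  (k <= qdeg P)%N -> qord P - m = s%:Z -> coef2 P m k = qcf P s k.
Proof. by rewrite /coef2 => -> ->. Qed.

Lemma coef2_gt (P : psd2 A) m k : qord P < m -> coef2 P m k = 0.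
Proof.
rewrite /coef2 => h; case: ifP => // _.
by case E: (qord P - m) => [s|s] //; exfalso; lia.
Qed.

Lemma coef2_gtk (P : psd2 A) m k : (qdeg P < k)%N -> coef2 P m k = 0.
Proof. by rewrite /coef2 => h; case: ifP => //; rewrite leqNgt h. Qed.

Lemma coef2_q_of o n (f : int -> nat -> A) m k :
  coef2 (q_of o n f) m k = if (m <= o) && (k <= n)%N then f m k else 0.
Proof.
rewrite /coef2 /q_of /=; case: (k <= n)%N; rewrite ?andbT ?andbF //.
case: ifP => h; case E: (o - m) => [s|s] //=; try lia.
by congr f; lia.
Qed.

Lemma coef2_qadd (P Q : psd2 A) m k :
  coef2 (qadd P Q) m k = coef2 P m k + coef2 Q m k.
Proof.
rewrite /qadd coef2_q_of le_max leq_max; case: ifP => // /negbT.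
rewrite negb_and => /orP[/norP[h1 h2]|/norP[h1 h2]].
- by rewrite !coef2_gt ?addr0 // ltNge.
- by rewrite !coef2_gtk ?addr0 // ltnNge.
Qed.

Lemma coef2_qopp (P : psd2 A) m k : coef2 (qopp P) m k = - coef2 P m k.
Proof.
rewrite /coef2 /=; case: ifP; rewrite ?oppr0 //.
by case: (qord P - m) => s //; rewrite oppr0.
Qed.

Lemma coef2_qcomm d e (P Q : psd2 A) m k :
  coef2 (qcomm d e P Q) m k = coef2 (qmul d e P Q) m k - coef2 (qmul d e Q P) m k.
Proof. by rewrite /qcomm /qsub coef2_qadd coef2_qopp. Qed.

Lemma coef2_ser2_0 (Q : psd A) m : coef2 (ser2 Q) m 0 = coef Q m.
Proof. by []. Qed.

Lemma coef2_ser2_S (Q : psd A) m k : coef2 (ser2 Q) m k.+1 = 0.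
Proof. by []. Qed.

End Coefficients.

Section Additive.
Variables (V W : zmodType) (f : V -> W).
Hypothesis fD : forall a b, f (a + b) = f a + f b.

Lemma add_map0 : f 0 = 0.
Proof. by apply: (addIr (f 0)); rewrite -fD !add0r. Qed.

Lemma add_mapN a : f (- a) = - f a.
Proof. by apply/eqP; rewrite -subr_eq0 opprK -fD addNr add_map0. Qed.

Lemma add_mapMn a n : f (a *+ n) = f a *+ n.
Proof. by elim: n => [|n IH]; rewrite ?mulr0n ?add_map0 // !mulrS fD IH. Qed.

Lemma add_mapMz a z : f (a *~ z) = f a *~ z.
Proof. by case: z => n /=; rewrite ?add_mapN add_mapMn. Qed.

End Additive.

Lemma der1 (A : pzRingType) (d : A -> A) :
  (forall a b, d (a + b) = d a + d b) ->
  (forall a b, d (a * b) = d a * b + a * d b) -> d 1 = 0.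
Proof.
move=> dD dM; have h := dM 1 1; rewrite !mulr1 mul1r in h.
by apply: (addIr (d 1)); rewrite add0r -h.
Qed.

Lemma der_natr (A : pzRingType) (d : A -> A) n :
  (forall a b, d (a + b) = d a + d b) ->
  (forall a b, d (a * b) = d a * b + a * d b) -> d n%:R = 0.
Proof. by move=> dD dM; rewrite add_mapMn // der1 // mul0rn. Qed.

Ltac der_simpl dD dM :=
  rewrite ?(dD, add_mapN dD, add_mapMz dD, add_mapMn dD, dM, add_map0 dD, der1 dD dM).

(* Evaluation of the finitely many terms of an explicit coefficient: closed
   natural-number and integer subterms (binomials, indices) are computed and
   the finite sums are unrolled. *)
Ltac is_nat c := lazymatch c with O => idtac | S ?x => is_nat x end.
Ltac is_intc c := lazymatch c with Posz ?n => is_nat n | Negz ?n => is_nat n end.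
Ltac is_boolc c := lazymatch c with true => idtac | false => idtac end.

Ltac closed_step :=
  match goal with
  | |- context [binz ?a ?b] =>
      let c := eval vm_compute in (binz a b) in is_intc c; change (binz a b) with c
  | |- context [bump ?a ?b] =>
      let c := eval vm_compute in (bump a b) in is_nat c; change (bump a b) with c
  | |- context [(?a - ?b)%N] =>
      let c := eval vm_compute in (a - b)%N in is_nat c; change (a - b)%N with c
  | |- context [(?a + ?b)%N] =>
      let c := eval vm_compute in (a + b)%N in is_nat c; change (a + b)%N with c
  | |- context [(?a * ?b)%N] =>
      let c := eval vm_compute in (a * b)%N in is_nat c; change (a * b)%N with c
  | |- context [(?a <= ?b)%N] =>
      let c := eval vm_compute in (a <= b)%N in is_boolc c; change (a <= b)%N with c
  | |- context [(?a == ?b :> nat)] =>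
      let c := eval vm_compute in (a == b) in is_boolc c; change (a == b) with c
  | |- context [binomial ?a ?b] =>
      let c := eval vm_compute in (binomial a b) in is_nat c; change (binomial a b) with c
  | |- context [absz ?a] =>
      let c := eval vm_compute in (absz a) in is_nat c; change (absz a) with c
  | |- context [(?a - ?b)%R : int] =>
      let c := eval vm_compute in ((a - b)%R : int) in is_intc c; change ((a - b)%R : int) with c
  | |- context [(?a + ?b)%R : int] =>
      let c := eval vm_compute in ((a + b)%R : int) in is_intc c; change ((a + b)%R : int) with c
  end.

Ltac expand := repeat (first [ progress (repeat closed_step) | rewrite big_ord0
  | rewrite big_ord_recl | rewrite big_mkcond | progress simpl ]).

(* Keep L and coefficient extraction folded under simplification, so that
   only the explicit finite sums being evaluated get unfolded. *)
Arguments Lop : simpl never.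
Arguments coef : simpl never.

Section LaxOperator.
Variable A : comPzRingType.
Variable d : A -> A.
Hypothesis dD : forall a b, d (a + b) = d a + d b.
Hypothesis dM : forall a b, d (a * b) = d a * b + a * d b.
Variable v : nat -> A.

Lemma pord_L : pord (Lop d v) = 1. Proof. by []. Qed.
Lemma pcf_L0 : pcf (Lop d v) 0 = 1.
Proof. by rewrite /Lop /=; expand; der_simpl dD dM; ring. Qed.
Lemma pcf_L1 : pcf (Lop d v) 1 = 0.
Proof. by rewrite /Lop /=; expand; der_simpl dD dM; ring. Qed.
Lemma pcf_L2 : pcf (Lop d v) 2 = v 0.
Proof. by rewrite /Lop /=; expand; der_simpl dD dM; ring. Qed.
Lemma pcf_L3 : pcf (Lop d v) 3 = - d (v 0).
Proof. by rewrite /Lop /=; expand; der_simpl dD dM; ring. Qed.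
Lemma pcf_L4 : pcf (Lop d v) 4 = v 1%N + d (d (v 0)).
Proof. by rewrite /Lop /=; expand; der_simpl dD dM; ring. Qed.
Lemma pcf_L5 : pcf (Lop d v) 5 = - d (v 1%N) *+ 2 - d (d (d (v 0))).
Proof. by rewrite /Lop /=; expand; der_simpl dD dM; ring. Qed.

Lemma low_coefs_square (P : psd A) :
  pord P = 1 -> pcf P 0 = 1 -> pcf P 1 = 0 -> pcf P 2 = v 0 -> pcf P 3 = - d (v 0) ->
  let Q := pmul d P (pmul d P (pmon A 0)) in
  [/\ pcf Q 0 = 1, pcf Q 1 = 0, pcf Q 2 = v 0 *+ 2 & pcf Q 3 = - d (v 0)].
Proof.
move=> hP h0 h1 h2 h3 /=; rewrite hP.
by split; expand; rewrite ?h0 ?h1 ?h2 ?h3; der_simpl dD dM; ring.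
Qed.

Lemma low_coefs_cube (P Q : psd A) :
  pord P = 1 -> pcf P 0 = 1 -> pcf P 1 = 0 -> pcf P 2 = v 0 -> pcf P 3 = - d (v 0) ->
  pcf Q 0 = 1 -> pcf Q 1 = 0 -> pcf Q 2 = v 0 *+ 2 -> pcf Q 3 = - d (v 0) ->
  let R := pmul d P Q in
  [/\ pcf R 0 = 1, pcf R 1 = 0, pcf R 2 = v 0 *+ 3 & pcf R 3 = 0].
Proof.
move=> hP h0 h1 h2 h3 g0 g1 g2 g3 /=; rewrite hP.
by split; expand; rewrite ?h0 ?h1 ?h2 ?h3 ?g0 ?g1 ?g2 ?g3; der_simpl dD dM; ring.
Qed.

Lemma pcf_L_cube : let R := ppow d (Lop d v) 3 in
  [/\ pcf R 0 = 1, pcf R 1 = 0, pcf R 2 = v 0 *+ 3 & pcf R 3 = 0].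
Proof.
have [q0 q1 q2 q3] := low_coefs_square pord_L pcf_L0 pcf_L1 pcf_L2 pcf_L3.
exact: (low_coefs_cube pord_L pcf_L0 pcf_L1 pcf_L2 pcf_L3 q0 q1 q2 q3).
Qed.

Lemma pord_A1 : pord (Aop d v 1) = 3. Proof. by []. Qed.

Lemma coef_A1 : let B := Aop d v 1 in
  [/\ coef B 0 = 0, coef B 1 = v 0 *+ 3, coef B 2 = 0 & coef B 3 = 1].
Proof.
have [c0 c1 c2 c3] := pcf_L_cube.
rewrite /Aop [(2 * 1 + 1)%N]/=.
by split; rewrite coef_pplus /=; [rewrite (@coefE _ _ _ 3) | rewrite (@coefE _ _ _ 2)
  | rewrite (@coefE _ _ _ 1) | rewrite (@coefE _ _ _ 0)].
Qed.

Lemma pcf_A1 : let B := Aop d v 1 in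
  [/\ pcf B 0 = 1, pcf B 1 = 0, pcf B 2 = v 0 *+ 3, pcf B 3 = 0
    & pcf B 4 = 0 /\ pcf B 5 = 0].
Proof.
have [c0 c1 c2 c3] := coef_A1.
have E t : pcf (Aop d v 1) t = coef (Aop d v 1) (3 - t%:Z).
  by rewrite (@coefE _ _ _ t) // pord_A1; lia.
by cbv zeta; rewrite !E; split => //; split; rewrite coef_pplus.
Qed.

Lemma padj_A1 (u : A) :
  padj_app d (Aop d v 1) u = - (d (d (d u)) + (d (v 0 * u)) *+ 3).
Proof.
move: coef_A1 pord_A1; move: (Aop d v 1) => B [c0 c1 c2 c3] hB.
by rewrite /padj_app hB; expand; rewrite c0 c1 c2 c3; der_simpl dD dM; ring.
Qed.

Lemma comm_low_coef (B P : psd A) : pord B = 3 -> pord P = 1 ->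
  pcf B 0 = 1 -> pcf B 1 = 0 -> pcf B 2 = v 0 *+ 3 -> pcf B 3 = 0 -> pcf B 4 = 0 ->
  pcf B 5 = 0 ->
  pcf P 0 = 1 -> pcf P 1 = 0 -> pcf P 2 = v 0 -> pcf P 3 = - d (v 0) ->
  pcf P 4 = v 1%N + d (d (v 0)) -> pcf P 5 = - d (v 1%N) *+ 2 - d (d (d (v 0))) ->
  pcf (pmul d B P) 5 - pcf (pmul d P B) 5
   = d (d (d (v 0))) + v 0 * d (v 0) *+ 6 + d (v 1%N) *+ 3.
Proof.
move=> hB hP b0 b1 b2 b3 b4 b5 h0 h1 h2 h3 h4 h5 /=; rewrite hB hP; expand.
by rewrite ?b0 ?b1 ?b2 ?b3 ?b4 ?b5 ?h0 ?h1 ?h2 ?h3 ?h4 ?h5; der_simpl dD dM; ring.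
Qed.

Lemma comm_A1_L :
  coef (pcomm d (Aop d v 1) (Lop d v)) (-1)
   = d (d (d (v 0))) + v 0 * d (v 0) *+ 6 + d (v 1%N) *+ 3.
Proof.
have [b0 b1 b2 b3 [b4 b5]] := pcf_A1.
rewrite coef_pcomm (@coefE _ _ _ 5) // (@coefE _ _ _ 5) //.
exact: (comm_low_coef pord_A1 pord_L b0 b1 b2 b3 b4 b5
   pcf_L0 pcf_L1 pcf_L2 pcf_L3 pcf_L4 pcf_L5).
Qed.

Lemma comm_L_inv (u : A) :
  coef (pcomm d (Lop d v) (pmul d (pmon A (-1)) (pconst u))) (-1) = d u.
Proof.
rewrite coef_pcomm (@coefE _ _ _ 1) // (@coefE _ _ _ 1) //.
move: pcf_L0 pcf_L1 pcf_L2 pord_L; move: (Lop d v) => P h0 h1 h2 hP /=.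
by rewrite hP; expand; rewrite ?h0 ?h1 ?h2; der_simpl dD dM; ring.
Qed.

Lemma map_L (f : A -> A) : coef (pmap f (Lop d v)) (-1) = f (v 0).
Proof. by rewrite (@coef_pmap _ _ _ _ 2) // pcf_L2. Qed.

End LaxOperator.

Section CrossCommutator.
Variable A : comPzRingType.
Variables d e : A -> A.
Hypothesis dD : forall a b, d (a + b) = d a + d b.
Hypothesis dM : forall a b, d (a * b) = d a * b + a * d b.
Hypothesis eD : forall a b, e (a + b) = e a + e b.
Hypothesis eM : forall a b, e (a * b) = e a * b + a * e b.
Variables (v w : nat -> A) (B L : psd A).
Hypotheses (hB : pord B = 3) (c0 : coef B 0 = 0) (c1 : coef B 1 = w 0 *+ 3)
  (c2 : coef B 2 = 0) (c3 : coef B 3 = 1).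
Hypotheses (hL : pord L = 1) (h0 : pcf L 0 = 1) (h1 : pcf L 1 = 0) (h2 : pcf L 2 = v 0).

Let P := qcomm d e (poly2 B) (ser2 L).

Ltac cross_simpl := rewrite /= hB ?hL; expand; rewrite ?c0 ?c1 ?c2 ?c3 ?h0 ?h1 ?h2;
  repeat progress (der_simpl dD dM; der_simpl eD eM); ring.

Lemma cross_coef_1 k : coef2 P 1 k = 0.
Proof.
rewrite /P coef2_qcomm.
case: (leqP k 3) => hk; last by rewrite !coef2_gtk ?subrr //= ?hB ?addn0.
rewrite (@coef2E _ _ _ _ 0); [ | by rewrite /= ?hB ?addn0 | by rewrite /= hL].
rewrite (@coef2E _ _ _ _ 0); [ | by rewrite /= ?hB ?addn0 | by rewrite /= hL].
by case: k hk => [|[|[|[|k]]]] // _; cross_simpl.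
Qed.

Lemma cross_coef_0_1 : coef2 P 0 1 = - d (w 0) *+ 3.
Proof.
rewrite /P coef2_qcomm.
rewrite (@coef2E _ _ _ _ 1); [ | by rewrite /= ?hB ?addn0 | by rewrite /= hL].
rewrite (@coef2E _ _ _ _ 1); [ | by rewrite /= ?hB ?addn0 | by rewrite /= hL].
by cross_simpl.
Qed.

Lemma cross_coef_0_ge2 k : (2 <= k)%N -> coef2 P 0 k = 0.
Proof.
move=> k2; rewrite /P coef2_qcomm.
case: (leqP k 3) => hk; last by rewrite !coef2_gtk ?subrr //= ?hB ?addn0.
rewrite (@coef2E _ _ _ _ 1); [ | by rewrite /= ?hB ?addn0 | by rewrite /= hL].
rewrite (@coef2E _ _ _ _ 1); [ | by rewrite /= ?hB ?addn0 | by rewrite /= hL].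
by case: k k2 hk => [|[|[|[|k]]]] // _ _; cross_simpl.
Qed.

Lemma cross_coef_m1_0 : coef2 P (-1) 0 = e (e (e (v 0))) + w 0 * e (v 0) *+ 3.
Proof.
rewrite /P coef2_qcomm.
rewrite (@coef2E _ _ _ _ 2); [ | by rewrite /= ?hB ?addn0 | by rewrite /= hL].
rewrite (@coef2E _ _ _ _ 2); [ | by rewrite /= ?hB ?addn0 | by rewrite /= hL].
by cross_simpl.
Qed.

End CrossCommutator.

Lemma iter_fix0 (A : zmodType) (f : A -> A) i : f 0 = 0 -> iter i f 0 = 0.
Proof. by move=> h; elim: i => //= i ->. Qed.

Lemma binz0 m : binz m 0 = 1.
Proof. by case: m => n /=; rewrite bin0 // expr0 mul1r. Qed.

Lemma sum_if_eq (A : zmodType) (N a : nat) (F : nat -> A) :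
  \sum_(i < N) (if i == a :> nat then F i else 0) = if (a < N)%N then F a else 0.
Proof. by rewrite -big_mkcond big_ord1_eq. Qed.

Lemma sum_if_eqc (A : zmodType) (N a : nat) (Y : A) :
  \sum_(i < N) (if i == a :> nat then Y else 0) = if (a < N)%N then Y else 0.
Proof. exact: (sum_if_eq N a (fun _ => Y)). Qed.

Lemma qcf_qmul (A : comPzRingType) d e (P Q : psd2 A) s r :
  qcf (qmul d e P Q) s r =
  \sum_(sp < s.+1) \sum_(i < s.+1 - sp) \sum_(kp < (qdeg P).+1) \sum_(j < kp.+1)
    \sum_(lq < (qdeg Q).+1)
    (if (kp - j + lq == r)%N then
       (qcf P sp kp * iter i d (iter j e (qcf Q (s - sp - i)%N lq)))
         *~ (binz (qord P - Posz sp) i * Posz 'C(kp, j))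
     else 0).
Proof. by []. Qed.

(* Writing X_{s,k} for
   the coefficient of d^(o-s) e^k in X, the product X H has coefficient
   X_{s,k-1} + X_{s-1,k} u at d^(o+1-s) e^k, provided the coefficients of X
   that could pick up derivatives of u or of 1 vanish. *)
Section RightMultiplicationByH.
Variable A : comPzRingType.
Variables d e : A -> A.
Hypothesis dD : forall a b, d (a + b) = d a + d b.
Hypothesis dM : forall a b, d (a * b) = d a * b + a * d b.
Hypothesis eD : forall a b, e (a + b) = e a + e b.
Hypothesis eM : forall a b, e (a * b) = e a * b + a * e b.
Variable u : A.

Lemma qcf_H_1 t : qcf (H2 u) t 1 = if t == 0%N then 1 else 0.
Proof. by case: t => [|[|t]]. Qed.

Lemma qcf_H_0 t : qcf (H2 u) t 0 = if t == 1%N then u else 0.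
Proof. by case: t => [|[|t]]. Qed.

Lemma iter_der_one i j :
  iter i d (iter j e 1) = if (i == 0%N) && (j == 0%N) then 1 else 0.
Proof.
have E j0 : iter j0 e 1 = if j0 == 0%N then 1 else 0.
  by case: j0 => [|j0] //; rewrite iterSr (der1 eD eM) iter_fix0 ?(add_map0 eD).
rewrite E; case: (j == 0%N); rewrite ?andbF ?andbT.
- by case: i => [|i] //; rewrite iterSr (der1 dD dM) iter_fix0 ?(add_map0 dD).
- by rewrite iter_fix0 ?if_same // (add_map0 dD).
Qed.

Lemma iter_der_zero i j : iter i d (iter j e 0) = 0.
Proof. by rewrite (@iter_fix0 _ e) ?(add_map0 eD) // iter_fix0 ?(add_map0 dD). Qed.

Variable X : psd2 A.
Let n := qdeg X.
Let o := qord X.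
Let c := qcf X.

Section ProductTerm.
Variables (s k sp i kp j : nat).
Hypotheses (hsp : (sp < s.+1)%N) (hi : (i < s.+1 - sp)%N).
Hypotheses (hkp : (kp < n.+1)%N) (hj : (j < kp.+1)%N).
Hypothesis ha : forall sp kp, (sp.+1 < s)%N -> (kp <= n)%N -> c sp kp = 0.
Hypothesis hb : forall kp, (0 < s)%N -> (k < kp)%N -> (kp <= n)%N -> c s.-1 kp = 0.

Lemma XH_term_e :
  (if (kp - j + 1 == k)%N then
     (c sp kp * iter i d (iter j e (if (s - sp - i == 0)%N then 1 else 0)))
       *~ (binz (o - Posz sp) i * ('C(kp, j))%:Z)
   else 0)
  = if j == 0%N then if kp.+1 == k then if i == 0%N then
      if sp == s then c sp kp else 0 else 0 else 0 else 0.
Proof.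
case: (eqVneq (s - sp - i)%N 0%N) => h.
- rewrite iter_der_one.
  case: (eqVneq i 0%N) => [hi0|hi0]; case: (eqVneq j 0%N) => [hj0|hj0] //=;
    rewrite ?mulr0 ?mul0rz ?if_same //.
  subst i j; rewrite binz0 bin0 mulr1 mulr1z subn0 addn1.
  have -> : sp = s by lia.
  by rewrite eqxx; case: ifP.
- rewrite iter_der_zero mulr0 mul0rz if_same.
  case: (eqVneq j 0%N) => // _; case: ifP => // _; case: (eqVneq i 0%N) => // hi0.
  by case: (eqVneq sp s) => // hs; exfalso; move: h; rewrite hi0 hs; lia.
Qed.

Lemma XH_term_u :
  (if (kp - j + 0 == k)%N then
     (c sp kp * iter i d (iter j e (if (s - sp - i == 1)%N then u else 0)))
       *~ (binz (o - Posz sp) i * ('C(kp, j))%:Z)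
   else 0)
  = if j == 0%N then if kp == k then if i == 0%N then
      if sp.+1 == s then c sp kp * u else 0 else 0 else 0 else 0.
Proof.
case: (eqVneq (s - sp - i)%N 1%N) => h.
- case: (eqVneq i 0%N) => [hi0|hi0].
  + subst i; case: (eqVneq j 0%N) => [hj0|hj0].
    * subst j; rewrite /= binz0 bin0 mulr1 mulr1z subn0 addn0.
      have -> : sp.+1 = s by lia.
      by rewrite eqxx; case: ifP.
    * case: ifP => // /eqP hk.
      have -> : sp = s.-1 by lia.
      by rewrite hb ?mul0r ?mul0rz //; rewrite /n; lia.
  + by rewrite ha ?mul0r ?mul0rz ?if_same //; lia.
- rewrite iter_der_zero mulr0 mul0rz if_same.
  case: (eqVneq j 0%N) => // _; case: ifP => // _; case: (eqVneq i 0%N) => // hi0.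
  by case: (eqVneq sp.+1 s) => // hs; exfalso; move: h; rewrite hi0 -hs; lia.
Qed.

End ProductTerm.

Lemma qcf_XH_indicators s k :
  (forall sp kp, (sp.+1 < s)%N -> (kp <= n)%N -> c sp kp = 0) ->
  (forall kp, (0 < s)%N -> (k < kp)%N -> (kp <= n)%N -> c s.-1 kp = 0) ->
  qcf (qmul d e X (H2 u)) s k =
  \sum_(sp < s.+1) \sum_(i < s.+1 - sp) \sum_(kp < n.+1) \sum_(j < kp.+1)
    ((if j == 0%N :> nat then if kp.+1 == k then if i == 0%N :> nat then
        if sp == s :> nat then c sp kp else 0 else 0 else 0 else 0)
    + (if j == 0%N :> nat then if kp == k :> nat then if i == 0%N :> nat then
        if sp.+1 == s then c sp kp * u else 0 else 0 else 0 else 0)).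
Proof.
move=> ha hb; rewrite qcf_qmul.
apply: eq_bigr => sp _; apply: eq_bigr => i _; apply: eq_bigr => kp _.
apply: eq_bigr => j _; rewrite big_ord_recl big_ord1.
have -> : nat_of_ord (lift ord0 (ord0 : 'I_1)) = 1%N by [].
have -> : nat_of_ord (ord0 : 'I_2) = 0%N by [].
rewrite qcf_H_0 qcf_H_1 addrC XH_term_e; try exact: ltn_ord.
by rewrite XH_term_u; try exact: ltn_ord; try exact: ha; try exact: hb.
Qed.

Lemma qcf_XH s k : (k <= n.+1)%N ->
  (forall sp kp, (sp.+1 < s)%N -> (kp <= n)%N -> c sp kp = 0) ->
  (forall kp, (0 < s)%N -> (k < kp)%N -> (kp <= n)%N -> c s.-1 kp = 0) ->
  qcf (qmul d e X (H2 u)) s k =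
   (if k is k'.+1 then c s k' else 0)
   + (if s is s'.+1 then (if (k <= n)%N then c s' k else 0) else 0) * u.
Proof.
move=> hk ha hb; rewrite qcf_XH_indicators //.
under eq_bigr => sp _ do under eq_bigr => i _ do under eq_bigr => kp _
  do rewrite big_split.
under eq_bigr => sp _ do under eq_bigr => i _ do rewrite big_split.
under eq_bigr => sp _ do rewrite big_split.
rewrite big_split /=.
congr (_ + _).
all: under eq_bigr => sp _ do under eq_bigr => i _ do under eq_bigr => kp _
  do rewrite sum_if_eqc ltn0Sn.
- case: k hk hb => [|k'] hk hb.
  + by rewrite big1 // => sp _; rewrite big1 // => i _; rewrite big1.
  + under eq_bigr => sp _ do under eq_bigr => i _ do under eq_bigr => kp _
      do rewrite eqSS.
    under eq_bigr => sp _ do under eq_bigr => i _ do rewrite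
       (sum_if_eq _ _ (fun kp => if i == 0%N :> nat then
          if sp == s :> nat then c sp kp else 0 else 0)) hk.
    under eq_bigr => sp _ do rewrite sum_if_eqc subn_gt0 ltn_ord.
    by rewrite (sum_if_eq _ _ (fun sp => c sp k')) ltnSn.
- under eq_bigr => sp _ do under eq_bigr => i _ do rewrite
       (sum_if_eq _ _ (fun kp => if i == 0%N :> nat then
          if sp.+1 == s then c sp kp * u else 0 else 0)) ltnS.
  case hkn: (k <= n)%N; last first.
    rewrite big1; last by move=> sp _; rewrite big1.
    by case: (s); rewrite mul0r.
  under eq_bigr => sp _ do rewrite sum_if_eqc subn_gt0 ltn_ord.
  case: s ha hb => [|s'] ha hb.
  + by rewrite big1 // mul0r.
  + under eq_bigr => sp _ do rewrite eqSS.
    by rewrite (sum_if_eq _ _ (fun sp => c sp k * u)) ltnS leqnSn.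
Qed.

End RightMultiplicationByH.

Section CoefficientsOfXH.
Variable A : comPzRingType.
Variables d e : A -> A.
Hypothesis dD : forall a b, d (a + b) = d a + d b.
Hypothesis dM : forall a b, d (a * b) = d a * b + a * d b.
Hypothesis eD : forall a b, e (a + b) = e a + e b.
Hypothesis eM : forall a b, e (a * b) = e a * b + a * e b.
Variables (u : A) (X : psd2 A).

Lemma coef2_XH m k :
  (forall m' j, m < m' -> coef2 X m' j = 0) ->
  (forall j, (k < j)%N -> coef2 X m j = 0) ->
  coef2 (qmul d e X (H2 u)) m k
  = (if k is k'.+1 then coef2 X (m - 1) k' else 0) + coef2 X m k * u.
Proof.
move=> h1 h2.
have cE mm kk ss : (kk <= qdeg X)%N -> qord X - mm = Posz ss -> qcf X ss kk = coef2 X mm kk.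
  by move=> a b; rewrite (coef2E a b).
case: (leqP k (qdeg X).+1) => hk; last first.
  rewrite (@coef2_gtk _ _ m k); last by rewrite /=; lia.
  rewrite (@coef2_gtk _ X m k); last by lia.
  case: k hk h2 => [|k'] hk h2 //; rewrite (@coef2_gtk _ X _ k') ?mul0r ?addr0 //; lia.
case: (ltP (qord X + 1) m) => ho.
  rewrite (@coef2_gt _ _ m k); last by rewrite /=; lia.
  rewrite (@coef2_gt _ X m k); last by lia.
  case: k hk h2 => [|k'] hk h2; rewrite ?(@coef2_gt _ X (m - 1)) ?mul0r ?addr0 //; lia.
have [s hs] : exists s : nat, (qord X + 1 - m)%R = Posz s.
  by exists (absz (qord X + 1 - m)%R); lia.
rewrite (@coef2E _ _ _ _ s); last exact: hs; last by rewrite /= addn1.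
rewrite (qcf_XH dD dM eD eM).
- congr (_ + _).
  + by case: k hk h2 => [|k'] hk h2 //; apply: cE; lia.
  + case: s hs => [|s'] hs; first by rewrite coef2_gt ?mul0r //; lia.
    case: ifP => hkn; last by rewrite coef2_gtk ?mul0r //; lia.
    by rewrite (cE m k s') //; lia.
- exact: hk.
- move=> sp kp hsp hkp; rewrite (cE (qord X - Posz sp) kp sp) //; first (apply: h1; lia).
  lia.
- move=> kp hs0 hkp hkn; rewrite (cE m kp s.-1) //; first (apply: h2; lia).
  lia.
Qed.

End CoefficientsOfXH.

(* If P = Q + X H with Q free of e and P
   without terms of d-degree >= 1, then X has no terms of d-degree >= 0
   (descending induction on the d-degree: the top e-coefficient of X in a
   given d-degree would survive in X H), and comparing the coefficients of
   d^0 e^(k+1) and of d^-1 e^0 yields the d^-1 coefficient of Q. *)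
Section ReductionModH.
Variable A : comPzRingType.
Variables d e : A -> A.
Hypothesis dD : forall a b, d (a + b) = d a + d b.
Hypothesis dM : forall a b, d (a * b) = d a * b + a * d b.
Hypothesis eD : forall a b, e (a + b) = e a + e b.
Hypothesis eM : forall a b, e (a * b) = e a * b + a * e b.
Variables (u : A) (P X : psd2 A) (Q : psd A).
Hypothesis hPQX : forall m k,
  coef2 P m k = coef2 (qadd (ser2 Q) (qmul d e X (H2 u))) m k.
Hypothesis hP_pos : forall m k, 1 <= m -> coef2 P m k = 0.

Lemma coef2_decomp m k :
  coef2 P m k = coef2 (ser2 Q) m k + coef2 (qmul d e X (H2 u)) m k.
Proof. by rewrite hPQX coef2_qadd. Qed.

Lemma quotient_vanishes_nonneg m j : 0 <= m -> coef2 X m j = 0.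
Proof.
move=> hm; suff vanish (t : nat) m' j' : 0 <= m' -> qord X - m' < Posz t ->
    coef2 X m' j' = 0 by apply: (vanish (absz (qord X - m)).+1) => //; lia.
elim: t m' j' => [|t IH] m' j' hm' ht; first by rewrite coef2_gt //; lia.
have [hlt|htop] : qord X - m' < Posz t \/ qord X - m' = Posz t by lia.
  exact: IH.
have := coef2_decomp (m' + 1) j'.+1.
rewrite hP_pos; last by lia.
rewrite coef2_ser2_S add0r (coef2_XH dD dM eD eM); first last.
- by move=> j'' hj''; apply: IH; lia.
- by move=> m'' j'' hm''; apply: IH; lia.
rewrite (IH (m' + 1) j'.+1); [|lia|lia].
by rewrite addrK mul0r addr0 => ->.
Qed.

Lemma quotient_coef_m1 j : coef2 X (-1) j = coef2 P 0 j.+1.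
Proof.
rewrite coef2_decomp coef2_ser2_S add0r (coef2_XH dD dM eD eM); first last.
- by move=> j' hj'; apply: quotient_vanishes_nonneg.
- by move=> m' j' hm'; apply: quotient_vanishes_nonneg; lia.
by rewrite (@quotient_vanishes_nonneg 0 j.+1) // mul0r addr0 sub0r.
Qed.

Hypothesis hP_0 : forall k, (2 <= k)%N -> coef2 P 0 k = 0.

Lemma reduced_coef_m1 : coef Q (-1) = coef2 P (-1) 0 - coef2 P 0 1 * u.
Proof.
have := coef2_decomp (-1) 0.
rewrite coef2_ser2_0 (coef2_XH dD dM eD eM); first last.
- by move=> j' hj'; rewrite quotient_coef_m1 hP_0.
- by move=> m' j' hm'; apply: quotient_vanishes_nonneg; lia.
by rewrite quotient_coef_m1 add0r => ->; rewrite addrK.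
Qed.

End ReductionModH.

Section FirstFlows.
Variable A : comPzRingType.
Variables d e : A -> A.
Hypothesis dD : forall a b, d (a + b) = d a + d b.
Hypothesis dM : forall a b, d (a * b) = d a * b + a * d b.
Variables (u : A) (v w : nat -> A) (D : A -> A).

Lemma lax_relation_v0 : lax_relation d e u v -> e (v 0) = d u.
Proof. by move/(_ (-1)); rewrite map_L // comm_L_inv. Qed.

Lemma flow_u : lax_flow d e u v w D 1 -> D u = d (d (d u)) + d (v 0 * u) *+ 3.
Proof. by case=> _ _ ->; rewrite padj_A1 // opprK. Qed.

Lemma flow_v0 : lax_flow d e u v w D 1 ->
  D (v 0) = d (d (d (v 0))) + v 0 * d (v 0) *+ 6 + d (v 1%N) *+ 3.
Proof. by case=> /(_ (-1)); rewrite map_L // comm_A1_L. Qed.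

Hypothesis eD : forall a b, e (a + b) = e a + e b.
Hypothesis eM : forall a b, e (a * b) = e a * b + a * e b.

Lemma cross_flow_v0 : lax_flow e d u w v D 1 ->
  D (v 0) = e (e (e (v 0))) + w 0 * e (v 0) *+ 3 + d (w 0) * u *+ 3.
Proof.
case=> _ [Q [[X hPQX] hDQ]] _.
have [c0 c1 c2 c3] := coef_A1 eD eM w.
have hB := pord_A1 e w; have hL := pord_L d v.
have h0 := pcf_L0 d v; have h1 := pcf_L1 dD dM v; have h2 := pcf_L2 dD dM v.
have hP_pos m k : 1 <= m ->
    coef2 (qcomm d e (poly2 (Aop e w 1)) (ser2 (Lop d v))) m k = 0.
  move=> hm; have [hgt|->] : 1 < m \/ m = 1 by lia.
    by rewrite coef2_gt.
  by apply: (@cross_coef_1 _ d e eD eM w).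
rewrite -(map_L dD dM v D) hDQ (reduced_coef_m1 dD dM eD eM hPQX hP_pos); last first.
  by move=> k hk; apply: (cross_coef_0_ge2 dD dM eD eM).
rewrite (cross_coef_m1_0 dD dM eD eM hB c0 c1 c2 c3 hL h0 h1 h2).
rewrite (cross_coef_0_1 dD dM eD eM hB c1 c2 c3 hL h0 h1).
by ring.
Qed.

End FirstFlows.

Theorem mainTheorem9 (R : realType) (A : comAlgType R[i])
    (d1 d2 : A -> A) (u : A) (v w : nat -> A) (tau : A -> A)
    (D11 D21 : A -> A)
    (* d1, d2 : commuting C-linear derivations *)
    (hd1 : is_derivation d1) (hd2 : is_derivation d2)
    (hd12 : forall a, d1 (d2 a) = d2 (d1 a))
    (* defining relations of the algebra *)
    (hrel1 : lax_relation d1 d2 u v)   (* d2(L1) = [L1, d1^{-1} u] *)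
    (hrel2 : lax_relation d2 d1 u w)   (* d1(L2) = [L2, d2^{-1} u] *)
    (* tau : R-algebra involution, conjugating scalars, acting on generators *)
    (htau_add : forall a b, tau (a + b) = tau a + tau b)
    (htau_mul : forall a b, tau (a * b) = tau a * tau b)
    (htau_1 : tau 1 = 1)
    (htau_scal : forall (c : R[i]) a, tau (c *: a) = c^* *: tau a)
    (htau_inv : forall a, tau (tau a) = a)
    (htau_v : forall i n, tau (iter n d1 (v i)) = iter n d2 (w i))
    (htau_w : forall j n, tau (iter n d2 (w j)) = iter n d1 (v j))
    (htau_u : forall p q, tau (iter p d1 (iter q d2 u)) = iter q d1 (iter p d2 u))
    (* d/dt_{1,1} and d/dt_{2,1} : evolutionary derivations defined by the Lax equations *)
    (hD11 : is_derivation D11) (hD21 : is_derivation D21)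
    (hD11c : forall a, D11 (d1 a) = d1 (D11 a) /\ D11 (d2 a) = d2 (D11 a))
    (hD21c : forall a, D21 (d1 a) = d1 (D21 a) /\ D21 (d2 a) = d2 (D21 a))
    (hflow11 : lax_flow d1 d2 u v w D11 1)
    (hflow21 : lax_flow d2 d1 u w v D21 1) :
  (* d/dt_1 = d/dt_{1,1} + d/dt_{2,1} *)
  D11 u + D21 u
    = iter 3 d1 u + iter 3 d2 u + 3 * d1 (v 0%N * u) + 3 * d2 (w 0%N * u)
  /\ D11 (v 0%N) + D21 (v 0%N)
    = iter 3 d1 (v 0%N) + iter 3 d2 (v 0%N) + 6 * v 0%N * d1 (v 0%N)
      + 3 * d1 (u * w 0%N) + 3 * d1 (v 1%N)
  /\ d2 (v 0%N) = d1 u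
  /\ d1 (w 0%N) = d2 u
  /\ w 0%N = tau (v 0%N)
  /\ (let vv := 3 * v 0%N in
      tau vv = 3 * w 0%N
      /\ D11 u + D21 u
         = iter 3 d1 u + iter 3 d2 u + d1 (u * vv) + d2 (u * tau vv)
      /\ 3 * d1 u = d2 vv).
Proof.
case: hd1 => d1D d1M _; case: hd2 => d2D d2M _.
have hv : d2 (v 0%N) = d1 u := lax_relation_v0 d1D d1M hrel1.
have hw : d1 (w 0%N) = d2 u := lax_relation_v0 d2D d2M hrel2.
have tv : tau (v 0%N) = w 0%N := htau_v 0%N 0%N.
have tvv : tau (3 * v 0%N) = 3 * w 0%N.
  by rewrite htau_mul add_mapMn // htau_1 tv.
have d13 : d1 3 = 0 := der_natr 3 d1D d1M.
have d23 : d2 3 = 0 := der_natr 3 d2D d2M.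
have flow_u_sum : D11 u + D21 u
    = iter 3 d1 u + iter 3 d2 u + 3 * d1 (v 0%N * u) + 3 * d2 (w 0%N * u).
  by rewrite (flow_u d1D d1M hflow11) (flow_u d2D d2M hflow21) /=; ring.
have flow_v0_sum : D11 (v 0%N) + D21 (v 0%N)
    = iter 3 d1 (v 0%N) + iter 3 d2 (v 0%N) + 6 * v 0%N * d1 (v 0%N)
      + 3 * d1 (u * w 0%N) + 3 * d1 (v 1%N).
  rewrite (flow_v0 d1D d1M hflow11) (cross_flow_v0 d1D d1M d2D d2M hflow21) /=.
  by rewrite hv d1M; ring.
do ![split=> //].
- by rewrite tvv flow_u_sum !d1M !d2M d13 d23; ring.
- by rewrite d2M d23 hv; ring.
Qed.
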